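(* In the roundabout exploration process described in the context, for every $t\in[N]$, \[\sum_{a_i\in A(t)}|D_i(t)|\le 2N-|A(t)|.\]
   Context: Let $n\ge 2$ and $k$ be natural numbers, $T$ a tree on an $n$-element vertex set $V$, and $N=2(n-1)$. Fix a root $r$ and a DFS tour of $T$ starting and ending at $r$ that traverses each edge of $T$ exactly twice, giving a cyclic vertex sequence $(v_1,\dots,v_N,v_{N+1})$ with $v_{N+1}=v_1=r$, and tour edges $e_i=\{v_i,v_{i+1}\}$ for $i\in[N]$. For $i,j\in[N]$ the circular interval $[\![i,j]\!]$ is $\{i,i+1,\dots,j\}$ if $i\le j$ and $\{i,\dots,N,1,\dots,j\}$ if $i>j$. Let $\langle G_1,\dots,G_N\rangle$ be graphs on $V$, each containing all but at most $k$ edges of $T$. Roundabout exploration process: agents $a_1,\dots,a_N$ with initial states $s_i(0)=i$. For steps $t=1,\dots,N$: (Movement) for every $i\in[N]$, if $s_i(t-1)=q$ then $s_i(t)=(q\bmod N)+1$ if $e_q\in E(G_t)$, and $s_i(t)=q$ otherwise. Let $D_i(t)=[\![i,s_i(t)]\!]$ and $D_i(0)=\{i\}$. (Elimination) $A(0)=\{a_1,\dots,a_N\}$; $A(t)$ is obtained from $A(t-1)$ by repeatedly removing an arbitrary agent $a_i$ of the current set with $D_i(t)\subseteq\bigcup D_j(t)$ over the other agents $a_j$ of the current set, until no such agent remains. *)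

From mathcomp Require Import all_boot.
Set Implicit Arguments. Unset Strict Implicit. Unset Printing Implicit Defensive.

Definition is_graph (V : finType) (E : {set {set V}}) : Prop :=
  forall e, e \in E -> #|e| = 2.

Definition gadj (V : finType) (E : {set {set V}}) : rel V :=
  fun x y => [set x; y] \in E.

Definition is_tree (V : finType) (T : {set {set V}}) : Prop :=
  [/\ is_graph T,
      (forall x y, connect (gadj T) x y) &
      (forall c : seq V, uniq c -> 3 <= size c -> ~~ cycle (gadj T) c)].

(* The (0-based) vertex sequence v 0, ..., v N of a closed tour starting and
   ending at r, traversing each edge of T exactly twice
   (tour edge q is {v q, v q.+1}, q < N). *)
Definition dfs_tour (V : finType) (T : {set {set V}}) (N : nat) (r : V)
    (v : nat -> V) : Prop :=
  [/\ v 0 = r, v N = r,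
      (forall q, q < N -> [set v q; v q.+1] \in T) &
      (forall e, e \in T -> #|[set q : 'I_N | [set v q; v q.+1] == e]| = 2)].

Definition cint (N : nat) (i j : 'I_N) : {set 'I_N} :=
  [set q : 'I_N | if i <= j then (i <= q) && (q <= j) else (i <= q) || (q <= j)].

Fixpoint state (V : finType) (N : nat) (v : nat -> V) (G : nat -> {set {set V}})
    (t : nat) (i : 'I_N) : 'I_N :=
  match t with
  | 0 => i
  | t'.+1 => let q := state v G t' i in
             if [set v q; v q.+1] \in G t'.+1 then ordS q else q
  end.

Definition Dset (V : finType) (N : nat) (v : nat -> V) (G : nat -> {set {set V}})
    (t : nat) (i : 'I_N) : {set 'I_N} :=
  cint i (state v G t i).

Definition redundant (V : finType) (N : nat) (v : nat -> V)
    (G : nat -> {set {set V}}) (t : nat) (A : {set 'I_N}) (i : 'I_N) : bool :=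
  (i \in A) && (Dset v G t i \subset \bigcup_(j in A :\ i) Dset v G t j).

Inductive elim_reach (N : nat) (P : {set 'I_N} -> 'I_N -> bool) :
    {set 'I_N} -> {set 'I_N} -> Prop :=
  | er_refl A : elim_reach P A A
  | er_step A i B : P A i -> elim_reach P (A :\ i) B -> elim_reach P A B.

Definition elim_history (V : finType) (N : nat) (v : nat -> V)
    (G : nat -> {set {set V}}) (A : nat -> {set 'I_N}) : Prop :=
  A 0 = setT /\
  (forall t, 1 <= t <= N ->
     elim_reach (redundant v G t) (A t.-1) (A t) /\
     (forall i, ~~ redundant v G t (A t) i)).

From mathcomp Require Import all_boot zify.
Set Implicit Arguments. Unset Strict Implicit.

(* Fix a step t and let the D_i, i in A(t), be the surviving arcs; by the
   stopping rule of the elimination none of them is covered by the union of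
   the others.  An arc through a point q is determined by how
   far it reaches backwards and forwards from q.  Among three arcs through q,
   one reaches neither strictly furthest back nor strictly furthest forward,
   so it is covered by the other two; hence every point lies in at most two
   arcs.  Moreover every arc owns a private point, lying in no other arc, and
   distinct arcs own distinct private points.  So the total length, counted
   pointwise, is at most 2N minus the number of private points. *)

Lemma exists_dominated (I : finType) (S : {set I}) (l r : I -> nat) :
  2 < #|S| ->
  exists c a b,
    [/\ c \in S, a \in S :\ c, b \in S :\ c, l c <= l a & r c <= r b].
Proof.
move=> S_gt2; have [i0 Si0] : exists i0, i0 \in S by apply/card_gt0P; lia.
case: (@arg_maxnP _ i0 (fun i => i \in S) l Si0) => a Sa a_max.
case: (@arg_maxnP _ i0 (fun i => i \in S) r Si0) => b Sb b_max.
have /card_gt0P [c] : 0 < #|S :\ a :\ b|.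
  by move: S_gt2; rewrite (cardsD1 a S) (cardsD1 b (S :\ a)) Sa !inE; case: eqP; lia.
rewrite !inE => /and3P [cb ca Sc].
exists c, a, b; split; rewrite ?inE ?(eq_sym a) ?(eq_sym b) ?ca ?cb //.
- exact: a_max.
- exact: b_max.
Qed.

Section CircularArcs.

Variable N : nat.

Definition cdist (x y : 'I_N) : nat := if x <= y then y - x else y + N - x.

Lemma mem_cint_cdist (i j q x : 'I_N) : q \in cint i j ->
  (x \in cint i j) = (cdist x q <= cdist i q) || (cdist q x <= cdist q j).
Proof.
rewrite !inE /cdist.
have := ltn_ord i; have := ltn_ord j; have := ltn_ord q; have := ltn_ord x.
move: (nat_of_ord i) (nat_of_ord j) (nat_of_ord q) (nat_of_ord x) => a b c d.
move=> x_lt q_lt j_lt i_lt.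
by repeat case: ifP => ?; move=> q_in; apply/idP/idP; lia.
Qed.

Variables (s : 'I_N -> 'I_N) (A : {set 'I_N}).

Let D i := cint i (s i).
Let U i := \bigcup_(j in A :\ i) D j.

Hypothesis irredundant : forall i, i \in A -> ~~ (D i \subset U i).

Definition cover_count (q : 'I_N) : nat := #|[set i in A | q \in D i]|.

Lemma cover_count_le2 q : cover_count q <= 2.
Proof.
rewrite leqNgt; apply/negP => /(exists_dominated (cdist^~ q) (fun i => cdist q (s i))).
case=> c [a [b [/setIdP [Ac qc]]]].
rewrite !in_setD1 => /andP [ac /setIdP [Aa qa]] /andP [bc /setIdP [Ab qb]] ca_back cb_fwd.
move/negP: (irredundant Ac); apply; apply/subsetP => x.
rewrite /D (mem_cint_cdist _ qc) => /orP [x_back | x_fwd].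
- apply/bigcupP; exists a; first by rewrite !inE ac.
  by rewrite /D (mem_cint_cdist _ qa) (leq_trans x_back ca_back).
- apply/bigcupP; exists b; first by rewrite !inE bc.
  by rewrite /D (mem_cint_cdist _ qb) (leq_trans x_fwd cb_fwd) orbT.
Qed.

Definition private_pt (i : 'I_N) : 'I_N := odflt i [pick q in D i :\: U i].

Lemma private_ptP i : i \in A -> private_pt i \in D i :\: U i.
Proof.
move=> Ai; rewrite /private_pt; case: pickP => [// | no_private].
by case/subsetPn: (irredundant Ai) => x Dx Ux; move: (no_private x); rewrite inE Dx Ux.
Qed.

Lemma private_pt_notin i j : i \in A -> j \in A -> j != i -> private_pt i \notin D j.
Proof.
move=> Ai Aj ji; case/setDP: (private_ptP Ai) => _; apply: contra => Dj.
by apply/bigcupP; exists j; rewrite // !inE ji.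
Qed.

Lemma cover_count_private i : i \in A -> cover_count (private_pt i) <= 1.
Proof.
move=> Ai; rewrite -(cards1 i); apply/subset_leq_card/subsetP => j /setIdP [Aj Dj].
by rewrite inE; apply: contraLR Dj => ji; apply: private_pt_notin.
Qed.

Lemma card_le_thin : #|A| <= #|[set q | cover_count q <= 1]|.
Proof.
have <- : #|private_pt @: A| = #|A|.
  apply: card_in_imset => i j Ai Aj eq_ij; apply/eqP/negPn/negP => ij.
  have := private_pt_notin Aj Ai ij.
  by rewrite -eq_ij; case/setDP: (private_ptP Ai) => ->.
apply/subset_leq_card/subsetP => _ /imsetP [i Ai ->].
by rewrite inE cover_count_private.
Qed.

Lemma sum_card_arcs : \sum_(i in A) #|D i| = \sum_q cover_count q.
Proof.
under eq_bigr => i _ do rewrite -sum1_card big_mkcond /=.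
rewrite exchange_big; apply: eq_bigr => q _.
rewrite /cover_count -sum1_card big_mkcond [RHS]big_mkcond /=; apply: eq_bigr => i _.
by rewrite !inE; case: (i \in A).
Qed.

Lemma sum_card_irredundant_arcs : \sum_(i in A) #|D i| <= 2 * N - #|A|.
Proof.
rewrite sum_card_arcs.
suff : \sum_q cover_count q + #|[set q | cover_count q <= 1]| <= 2 * N.
  by have := card_le_thin; lia.
rewrite -sum1_card [X in _ + X]big_mkcond -big_split /=.
have -> : 2 * N = \sum_(q : 'I_N) 2 by rewrite sum_nat_const card_ord mulnC.
apply: leq_sum => q _; have := cover_count_le2 q.
by rewrite inE; case: (leqP (cover_count q) 1); lia.
Qed.

End CircularArcs.

Theorem lemma7 (V : finType) (n k : nat) (T : {set {set V}}) (r : V)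
    (v : nat -> V) (G : nat -> {set {set V}}) (A : nat -> {set 'I_(2 * (n - 1))}) :
  2 <= n -> #|V| = n -> is_tree T -> dfs_tour T (2 * (n - 1)) r v ->
  (forall t, 1 <= t <= 2 * (n - 1) -> is_graph (G t) /\ #|T :\: G t| <= k) ->
  elim_history v G A ->
  forall t, 1 <= t <= 2 * (n - 1) ->
    \sum_(i in A t) #|Dset v G t i| <= 2 * (2 * (n - 1)) - #|A t|.
Proof.
move=> _ _ _ _ _ [_ elim_step] t t_range.
have [_ stopped] := elim_step t t_range.
apply: (sum_card_irredundant_arcs (s := state v G t)) => i Ai.
by move: (stopped i); rewrite /redundant Ai.
Qed.
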